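(* Let $N$ be a prime and let $f$ be a function satisfying the standing assumptions in the context. Let $X,Y,Z \subseteq \mathbb{Z}/N\mathbb{Z}$ and $0<\delta_1\le\delta_2$ be such that for each $x\in X$ the number of $y\in Y$ with $-x-y\in Z$ lies between $\delta_1 N$ and $\delta_2 N$, and the same holds with the roles of $X$, $Y$, $Z$ permuted (i.e. for each $y \in Y$ the number of $z\in Z$ with $-y-z\in X$ lies between $\delta_1N$ and $\delta_2N$, and similarly for each element of each set, with any ordering of the other two sets). Then $$|X| \le K \frac{\delta_2}{\delta_1} f(\delta_2^{-1}) N$$ for an absolute constant $K$, and the analogous inequalities hold for $|Y|$ and $|Z|$.
   Context: An additive matching in a finite abelian group $G$ is a collection of triples $(x_i,y_i,z_i)$, $i=1,\dots,m$, of elements of $G$ with $x_i + y_j + z_k = 0$ if and only if $i=j=k$; its size is $m$. Standing assumptions: $f$ is a positive function such that for every $M$, every additive matching in $\mathbb{Z}/M\mathbb{Z}$ has size at most $f(M)M$; $f$ is decreasing, while $Af(A)<Bf(B)$ whenever $A<B$. *)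

From HB Require Import structures.
From mathcomp Require Import all_boot all_order all_algebra.
From mathcomp Require Import reals.
Set Implicit Arguments. Unset Strict Implicit. Unset Printing Implicit Defensive.
Import Order.TTheory GRing.Theory Num.Theory.
Local Open Scope ring_scope.

Definition additive_matching (G : zmodType) (m : nat) (x y z : 'I_m -> G) : Prop :=
  forall i j k : 'I_m, (x i + y j + z k == 0) = ((i == j) && (j == k)).

(* Standing assumptions on f : (0, oo) -> R.
   Z/MZ for M >= 1 is represented as 'I_M'.+1 with M = M'.+1. *)
Definition standing_assumptions (R : realType) (f : R -> R) : Prop :=
  [/\ (forall x : R, 0 < x -> 0 < f x),
      (forall (M m : nat) (x y z : 'I_m -> 'I_M.+1),
          additive_matching x y z -> (m%:R : R) <= f (M.+1)%:R * (M.+1)%:R),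
      (forall A B : R, 0 < A -> A <= B -> f B <= f A) &
      (forall A B : R, 0 < A -> A < B -> A * f A < B * f B)].

Definition count_bounds (N : nat) (R : realType) (d1 d2 : R)
    (A B C : {set 'Z_N}) : Prop :=
  forall a, a \in A ->
    d1 * N%:R <= (#|[set b in B | - a - b \in C]|)%:R /\
    (#|[set b in B | - a - b \in C]|)%:R <= d2 * N%:R.

From HB Require Import structures.
From mathcomp Require Import all_boot all_order all_algebra.
From mathcomp Require Import reals.
From mathcomp Require Import ring lra.
Import Order.TTheory GRing.Theory Num.Theory.
Local Open Scope ring_scope.
Set Implicit Arguments. Unset Strict Implicit. Unset Printing Implicit Defensive.

(* Let T be the set of triangles (x, y) with x in X, y in Y and -x-y in Z; the
   count bounds give |T| >= d1 N |X|.  A frame (l, u, w) with l <> 0 keeps the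
   triangles with l x - u and l y - w in [0, L), and every triangle is kept by
   (N-1) L^2 frames.  Within a frame, the triangles sharing no line (same x,
   same y or same x + y) with another kept triangle form an additive matching,
   which t |-> l t - (u, w) carries without wrap-around into Z/(2L-1); so there
   are at most (2L-1) f(2L-1) of them.  Every other kept triangle has a
   collinear partner; there are at most 3 d2 N |T| collinear pairs, each kept
   by at most 2 L^3 frames.  For L about 1/(24 d2) the partnered triangles are
   at most half of the total, and since A f(A) increases this gives
   |T| <= 4608 N^2 d2 f(1/d2). *)

Lemma double_count (I J : finType) (A : {set I}) (B : {set J}) (r : I -> J -> bool) :
  (\sum_(i in A) #|[set j in B | r i j]| = \sum_(j in B) #|[set i in A | r i j]|)%N.
Proof.
under eq_bigr => i _ do rewrite -sum1dep_card.
rewrite (exchange_big_dep (mem B)) /=; last by move=> i j _ /andP[].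
by apply: eq_bigr => j jB; rewrite -sum1dep_card; apply: eq_bigl => i; rewrite jB.
Qed.

Lemma card_sigma (I J : finType) (P : pred I) (S : I -> {set J}) :
  #|[set p : I * J | P p.1 && (p.2 \in S p.1)]| = (\sum_(i | P i) #|S i|)%N.
Proof.
rewrite -sum1dep_card -(pair_big_dep P (fun i j => j \in S i) (fun _ _ => 1%N)) /=.
by apply: eq_bigr => i _; rewrite sum1_card.
Qed.

Lemma card_rel_le (R : numDomainType) (T : finType) (A : {set T}) (r : rel T) (D : R) :
  (forall t, t \in A -> (#|[set t' in A | r t t']|%:R : R) <= D) ->
  (#|[set q : T * T | [&& q.1 \in A, q.2 \in A & r q.1 q.2]]|%:R : R) <= #|A|%:R * D.
Proof.
move=> le_D; pose S t := [set t' in A | r t t'].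
have -> : [set q : T * T | [&& q.1 \in A, q.2 \in A & r q.1 q.2]] =
    [set q | (q.1 \in A) && (q.2 \in S q.1)] by apply/setP => q; rewrite !inE.
rewrite (card_sigma (fun t => t \in A) S) natr_sum mulr_natl -sumr_const.
exact: ler_sum.
Qed.

Lemma card_translate (G : finZmodType) (c : G) (A : {set G}) :
  #|[set u | c - u \in A]| = #|A|.
Proof. exact: card_preimset (subrI c). Qed.

Section IsolatedTriangles.
Variable G : finZmodType.

Definition collinear (t t' : G * G) :=
  [|| t.1 == t'.1, t.2 == t'.2 | t.1 + t.2 == t'.1 + t'.2].

Definition isolated (A : {set G * G}) :=
  [set t in A | [forall t' in A, collinear t t' ==> (t' == t)]].

Definition collinear_pairs (A : {set G * G}) :=
  [set q : (G * G) * (G * G) | [&& q.1 \in A, q.2 \in A, q.1 != q.2 & collinear q.1 q.2]].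

Lemma card_le_isolated (A : {set G * G}) :
  (#|A| <= #|isolated A| + #|collinear_pairs A|)%N.
Proof.
have sub : A \subset isolated A :|: fst @: collinear_pairs A.
  apply/subsetP => t tA; rewrite in_setU inE tA /=.
  case: forallP => [//|/forallP]; rewrite negb_forall => /existsP[t'].
  rewrite !negb_imply => /and3P[t'A tt' ne].
  by apply/imsetP; exists (t, t'); rewrite // inE tA t'A tt' eq_sym ne.
apply: leq_trans (subset_leq_card sub) _; rewrite cardsU.
by apply: leq_trans (leq_subr _ _) _; rewrite leq_add2l leq_imset_card.
Qed.

Variables X Y Z : {set G}.

Definition triangle (t : G * G) := [&& t.1 \in X, t.2 \in Y & - t.1 - t.2 \in Z].

Definition triangles := [set t | triangle t].

Lemma card_triangles : #|triangles| = (\sum_(x in X) #|[set y in Y | (- x - y)%R \in Z]|)%N.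
Proof.
rewrite -(card_sigma (mem X) (fun x => [set y in Y | - x - y \in Z])) /=.
by apply: eq_card => t; rewrite !inE.
Qed.

Lemma card_fibre_fst (t : G * G) :
  (#|[set t' in triangles | t.1 == t'.1]| <= #|[set y in Y | (- t.1 - y)%R \in Z]|)%N.
Proof.
apply: leq_trans (leq_imset_card (fun y => (t.1, y)) _); apply: subset_leq_card.
apply/subsetP => t'; rewrite !inE /triangle => /andP[/and3P[_ y' z'] /eqP e].
by apply/imsetP; exists t'.2; rewrite ?inE ?y' ?e // -surjective_pairing.
Qed.

Lemma card_fibre_snd (t : G * G) :
  (#|[set t' in triangles | t.2 == t'.2]| <= #|[set x in X | (- t.2 - x)%R \in Z]|)%N.
Proof.
apply: leq_trans (leq_imset_card (fun x => (x, t.2)) _); apply: subset_leq_card.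
apply/subsetP => t'; rewrite !inE /triangle => /andP[/and3P[x' _ z'] /eqP e].
apply/imsetP; exists t'.1; last by rewrite e -surjective_pairing.
by rewrite inE x' e addrC.
Qed.

Lemma card_fibre_sum (t : G * G) :
  (#|[set t' in triangles | (t.1 + t.2 == t'.1 + t'.2)%R]|
    <= #|[set x in X | (t.1 + t.2 - x)%R \in Y]|)%N.
Proof.
apply: leq_trans (leq_imset_card (fun x => (x, t.1 + t.2 - x)) _); apply: subset_leq_card.
apply/subsetP => t'; rewrite !inE /triangle => /andP[/and3P[x' y' _] /eqP e].
have e2 : t'.2 = t.1 + t.2 - t'.1 by rewrite e addrC addKr.
by apply/imsetP; exists t'.1; rewrite ?inE ?x' -?e2 // -surjective_pairing.
Qed.

Definition box (U W : {set G}) := [set t | [&& triangle t, t.1 \in U & t.2 \in W]].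

Lemma isolated_box_matching (U W : {set G}) m (e : 'I_m -> G * G) :
  injective e -> (forall i, e i \in isolated (box U W)) ->
  additive_matching (fun i => (e i).1) (fun i => (e i).2) (fun i => - (e i).1 - (e i).2).
Proof.
move=> inj_e isoS i j k; apply/idP/idP; last first.
  by case/andP => /eqP <- /eqP <-; rewrite -opprD subrr.
rewrite -opprD subr_eq0 => /eqP sum_ijk.
have iso l t : t \in box U W -> collinear (e l) t -> t = e l.
  move: (isoS l); rewrite inE => /andP[_ /forallP/(_ t)] h tB ct.
  by apply/eqP; rewrite tB ct in h.
have boxE l : e l \in box U W by move: (isoS l); rewrite inE => /andP[].
have tB : ((e i).1, (e j).2) \in box U W.
  move: (boxE i) (boxE j) (boxE k); rewrite !inE /triangle /=.
  case/and3P => /and3P[xi _ _] ui _; case/and3P => /and3P[_ yj _] _ wj.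
  case/and3P => /and3P[_ _ zk] _ _.
  by rewrite xi yj ui wj -opprD sum_ijk opprD zk.
have ei : ((e i).1, (e j).2) = e i by apply: iso tB _; rewrite /collinear eqxx.
have ej : ((e i).1, (e j).2) = e j by apply: iso tB _; rewrite /collinear eqxx orbT.
have eij : i = j by apply: inj_e; rewrite -ei -ej.
subst j; have eki : e k = e i.
  by apply: iso (boxE k) _; rewrite /collinear sum_ijk eqxx !orbT.
by rewrite -(inj_e _ _ eki) eqxx.
Qed.

End IsolatedTriangles.

Section Segments.
Variable p' : nat.
Local Notation N := p'.+2.
Local Notation G := 'Z_N.

Definition seg (n : nat) : {set G} := [set a : G | (a < n)%N].

Lemma card_seg n : (n <= N)%N -> #|seg n| = n.
Proof.
move=> le_nN; have -> : seg n = [set widen_ord le_nN i | i in 'I_n].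
  apply/setP => a; rewrite inE; apply/idP/imsetP => [lt_an | [i _ ->]]; last by rewrite /= ltn_ord.
  by exists (Ordinal lt_an) => //; apply: val_inj.
by rewrite card_imset ?card_ord //; by move=> i j /(congr1 val) /= /val_inj.
Qed.

Lemma seg_subr_or n (a b : G) : a \in seg n -> b \in seg n -> (b - a \in seg n) || (a - b \in seg n).
Proof.
rewrite !inE => lt_an lt_bn.
wlog le_ab : a b lt_an lt_bn / (a <= b)%N.
  move=> wlog_ab; case: (leqP a b) => [|/ltnW] le; first exact: wlog_ab.
  by rewrite orbC; apply: wlog_ab.
suff -> : (b - a : G) = (b - a)%N :> nat by rewrite (leq_ltn_trans (leq_subr _ _) lt_bn).
rewrite -{1}(natr_Zp a) -{1}(natr_Zp b) -natrB // val_Zp_nat // modn_small //.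
exact: leq_ltn_trans (leq_subr _ _) (ltn_ord b).
Qed.

Lemma Zp_unit_prime (l : G) : prime N -> l != 0 -> l \is a GRing.unit.
Proof.
move=> pN nz_l; have l_gt0 : (0 < l)%N.
  by rewrite lt0n; apply: contra nz_l => /eqP l0; apply/eqP/val_inj.
rewrite -(natr_Zp l) unitZpE // prime_coprime //.
by apply/negP => /(dvdn_leq l_gt0); rewrite leqNgt ltn_ord.
Qed.

Lemma eq_natr_Zp (a b : nat) : (a < N)%N -> (b < N)%N -> ((a%:R : G) == b%:R) = (a == b).
Proof.
move=> lt_aN lt_bN; apply/eqP/eqP => [/(congr1 (@nat_of_ord _))|-> //].
by rewrite !val_Zp_nat // !modn_small.
Qed.

(* As 2n < N, sums of two elements of [seg n.+1] do not wrap around modulo N,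
   so x |-> l x - u is a Freiman isomorphism onto a subset of [0, 2n]. *)
Lemma seg_matching_compress n (l u w : G) m (x y z : 'I_m -> G) :
  l \is a GRing.unit -> (n.*2 < N)%N ->
  (forall i, l * x i - u \in seg n.+1) -> (forall i, l * y i - w \in seg n.+1) ->
  additive_matching x y z ->
  exists x' y' z' : 'I_m -> 'I_(n.*2).+1, additive_matching x' y' z'.
Proof.
move=> lU lt_2nN xS yS mxyz.
pose a i : nat := l * x i - u; pose b i : nat := l * y i - w.
have le_ab i j : (a i + b j <= n.*2)%N.
  by rewrite -addnn leq_add // -ltnS; [move: (xS i) | move: (yS j)]; rewrite inE.
have sumE i j : ((a i + b j)%:R : G) = l * (x i + y j) - (u + w).
  by rewrite natrD !natr_Zp; ring.
have zE k : z k = - (x k + y k).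
  by apply/esym/addr0_eq/eqP; rewrite mxyz !eqxx.
exists (fun i => inord (a i)), (fun i => inord (b i)), (fun k => - inord (a k + b k)).
have le_a i : (a i <= n.*2)%N by apply: leq_trans (le_ab i i); rewrite leq_addr.
have le_b j : (b j <= n.*2)%N by apply: leq_trans (le_ab j j); rewrite leq_addl.
have lt_abN i j : (a i + b j < N)%N by apply: leq_ltn_trans (le_ab i j) lt_2nN.
move=> i j k; rewrite subr_eq0 -(mxyz i j k) -val_eqE /=.
rewrite !inordK ?ltnS ?le_a ?le_b ?le_ab // modn_small ?ltnS ?le_ab //.
rewrite zE subr_eq0 -(inj_eq (mulrI lU)) -(inj_eq (addIr (- (u + w)))).
by rewrite -!sumE eq_natr_Zp.
Qed.

End Segments.

Arguments seg {p'} n.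

Section FrameCounting.
Variables (p' : nat) (X Y Z : {set 'Z_p'.+2}) (n : nat).
Local Notation N := p'.+2.
Local Notation G := 'Z_N.
Local Notation L := n.+1.
Local Notation M := n.*2.+1.
Local Notation T := (triangles X Y Z).
Hypotheses (pN : prime N) (lt_2nN : (n.*2 < N)%N).

Let le_LN : (L <= N)%N.
Proof. by apply: leq_trans lt_2nN; rewrite ltnS -addnn leq_addl. Qed.

Definition frames : {set G * (G * G)} := setX [set~ 0] setT.

Definition near (p : G * (G * G)) (t : G * G) :=
  (p.1 * t.1 - p.2.1 \in seg L) && (p.1 * t.2 - p.2.2 \in seg L).

Lemma card_frames_near t : #|[set p in frames | near p t]| = (N.-1 * (L * L))%N.
Proof.
pose S l := setX [set u | l * t.1 - u \in seg L] [set w | l * t.2 - w \in seg L].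
have -> : [set p in frames | near p t] = [set p | (p.1 != 0) && (p.2 \in S p.1)].
  by apply/setP => -[l [u w]]; rewrite !inE andbT /near !inE.
rewrite (card_sigma (fun l => l != 0) S) (eq_bigr (fun=> (L * L)%N)) => [|l _]; last first.
  by rewrite cardsX !card_translate card_seg.
rewrite sum_nat_cond_const -[N in N.-1]card_ord -(cardsC1 (0 : G)).
by congr (_ * _)%N; apply: eq_card => l; rewrite !inE.
Qed.

Definition common_window (c c' : G) := [set u | (c - u \in seg L) && (c' - u \in seg L)].

(* If l a - u and l a' - u both lie in [seg L], then l (a' - a) or its
   opposite does, which happens for at most 2L values of l as a' - a is a unit. *)
Lemma sum_card_common_window (a a' : G) : a != a' ->
  (\sum_(l : G | l != 0%R) #|common_window (l * a)%R (l * a')%R| <= L * (L + L))%N.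
Proof.
move=> ne_aa'; have dU : a' - a \is a GRing.unit.
  by apply: Zp_unit_prime; rewrite // subr_eq0 eq_sym.
pose D := [set l : G | l * (a' - a) \in seg L] :|: [set l | - (l * (a' - a)) \in seg L].
have card_D : (#|D| <= L + L)%N.
  rewrite cardsU; apply: leq_trans (leq_subr _ _) _.
  rewrite (card_preimset _ (mulIr dU)) (card_preimset _ (inj_comp oppr_inj (mulIr dU))).
  by rewrite card_seg.
have cnt (l : G) : (#|common_window (l * a)%R (l * a')%R| <= if l \in D then L else 0)%N.
  case: ifPn => [_ | lD].
    rewrite -(card_seg le_LN) -(card_translate (l * a) (seg L)).
    by apply: subset_leq_card; apply/subsetP => u; rewrite !inE => /andP[].
  rewrite leqn0 cards_eq0; apply/eqP/setP => u; rewrite in_set0 inE.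
  apply/negP => /andP[ua ua']; move: lD; have := seg_subr_or ua ua'; rewrite !inE.
  have -> : l * a' - u - (l * a - u) = l * (a' - a) by ring.
  have -> : l * a - u - (l * a' - u) = - (l * (a' - a)) by ring.
  by move=> ->.
apply: (@leq_trans (\sum_(l : G | l != 0%R) (if l \in D then L else 0))).
  by apply: leq_sum => l _; exact: cnt.
rewrite -big_mkcondr sum_nat_cond_const mulnC leq_mul2l; apply/orP; right.
by apply: leq_trans card_D; apply: subset_leq_card; apply/subsetP => l; rewrite inE => /andP[].
Qed.

Lemma card_common_window (c c' : G) : (#|common_window c c'| <= L)%N.
Proof.
rewrite -(card_seg le_LN) -(card_translate c (seg L)).
by apply: subset_leq_card; apply/subsetP => u; rewrite !inE => /andP[].
Qed.

Lemma card_frames_near2 t t' : t != t' ->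
  (#|[set p in frames | near p t && near p t']| <= L * L * (L + L))%N.
Proof.
move=> ne_tt'.
pose S l := setX (common_window (l * t.1) (l * t'.1)) (common_window (l * t.2) (l * t'.2)).
have -> : [set p in frames | near p t && near p t'] = [set p | (p.1 != 0) && (p.2 \in S p.1)].
  by apply/setP => -[l [u w]]; rewrite !inE andbT /near !inE /= -!andbA; do !bool_congr.
rewrite (card_sigma (fun l => l != 0) S).
have [e1|ne1] := eqVneq t.1 t'.1.
  have ne2 : t.2 != t'.2.
    by apply: contraNneq ne_tt' => e2; rewrite [t]surjective_pairing e1 e2 -surjective_pairing.
  apply: (@leq_trans (\sum_(l : G | l != 0%R) L * #|common_window (l * t.2)%R (l * t'.2)%R|)).
    by apply: leq_sum => l _; rewrite cardsX leq_mul2r card_common_window orbT.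
  by rewrite -big_distrr /= -mulnA leq_mul2l sum_card_common_window ?orbT.
apply: (@leq_trans (\sum_(l : G | l != 0%R) #|common_window (l * t.1)%R (l * t'.1)%R| * L)).
  by apply: leq_sum => l _; rewrite cardsX leq_mul2l card_common_window orbT.
by rewrite -big_distrl /= mulnAC leq_mul2r sum_card_common_window ?orbT.
Qed.

Definition frame_box (p : G * (G * G)) :=
  box X Y Z [set x | p.1 * x - p.2.1 \in seg L] [set y | p.1 * y - p.2.2 \in seg L].

Lemma frame_boxE p : frame_box p = [set t in T | near p t].
Proof. by apply/setP => t; rewrite !inE /near !inE. Qed.

Lemma sum_card_frame_box :
  (\sum_(p in frames) #|frame_box p| = #|T| * (N.-1 * (L * L)))%N.
Proof.
under eq_bigr => p _ do rewrite frame_boxE.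
rewrite double_count; under eq_bigr => t _ do rewrite card_frames_near.
by rewrite sum_nat_const.
Qed.

Lemma sum_card_collinear_frame_box :
  (\sum_(p in frames) #|collinear_pairs (frame_box p)|
    <= #|collinear_pairs T| * (L * L * (L + L)))%N.
Proof.
have CPE p : collinear_pairs (frame_box p) =
    [set q in collinear_pairs T | near p q.1 && near p q.2].
  by apply/setP => q; rewrite !inE /near !inE -!andbA; do !bool_congr.
under eq_bigr => p _ do rewrite CPE.
rewrite double_count -sum_nat_const; apply: leq_sum => q.
by rewrite inE => /and4P[_ _ ne _]; exact: card_frames_near2.
Qed.

Lemma card_isolated_frame_box (R : realType) (f : R -> R) p :
  standing_assumptions f -> p \in frames ->
  (#|isolated (frame_box p)|%:R : R) <= f M%:R * M%:R.
Proof.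
case=> _ matching_le _ _; rewrite !inE andbT => nz_l.
set S := isolated (frame_box p).
have inS i : enum_val i \in S := enum_valP i.
have [x' [y' [z' m']]] : exists x' y' z' : 'I_#|S| -> 'I_M, additive_matching x' y' z'.
  apply: (seg_matching_compress (u := p.2.1) (w := p.2.2) (Zp_unit_prime pN nz_l) lt_2nN _ _
    (isolated_box_matching enum_val_inj inS)) => i;
  by move: (inS i); rewrite !inE => /andP[/and3P[]].
exact: matching_le m'.
Qed.

Lemma card_collinear_triangles (R : realType) (d1 d2 : R) :
  count_bounds d1 d2 X Y Z -> count_bounds d1 d2 Y X Z -> count_bounds d1 d2 Z X Y ->
  (#|collinear_pairs T|%:R : R) <= 3%:R * (#|T|%:R * (d2 * N%:R)).
Proof.
move=> cXYZ cYXZ cZXY.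
pose pairs (r : rel (G * G)) := [set q : (G * G) * (G * G) |
  [&& q.1 \in T, q.2 \in T & r q.1 q.2]].
pose r1 : rel (G * G) := fun t t' => t.1 == t'.1.
pose r2 : rel (G * G) := fun t t' => t.2 == t'.2.
pose r3 : rel (G * G) := fun t t' => t.1 + t.2 == t'.1 + t'.2.
have sub3 : collinear_pairs T \subset pairs r1 :|: pairs r2 :|: pairs r3.
  by apply/subsetP => q; rewrite !inE => /and4P[-> -> _]; rewrite /= /collinear orbA.
apply: le_trans (_ : ((#|pairs r1| + #|pairs r2| + #|pairs r3|)%N%:R : R) <= _).
  rewrite ler_nat; apply: leq_trans (subset_leq_card sub3) _.
  rewrite cardsU; apply: leq_trans (leq_subr _ _) _; rewrite leq_add2r.
  by rewrite cardsU leq_subr.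
rewrite -[3%N]/(1 + 1 + 1)%N !natrD !mulrDl mul1r.
apply: lerD; first apply: lerD; apply: card_rel_le => t; rewrite inE => /and3P[tX tY tZ].
- by apply: le_trans _ (proj2 (cXYZ _ tX)); rewrite ler_nat card_fibre_fst.
- by apply: le_trans _ (proj2 (cYXZ _ tY)); rewrite ler_nat card_fibre_snd.
- by apply: le_trans _ (proj2 (cZXY _ tZ)); rewrite ler_nat opprD !opprK card_fibre_sum.
Qed.

Lemma card_frames : #|frames| = (N.-1 * (N * N))%N.
Proof. by rewrite cardsX cardsC1 cardsT card_prod !card_ord. Qed.

Lemma frame_count_inequality (R : realType) (f : R -> R) (d1 d2 : R) :
  standing_assumptions f ->
  count_bounds d1 d2 X Y Z -> count_bounds d1 d2 Y X Z -> count_bounds d1 d2 Z X Y ->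
  #|T|%:R * (N.-1)%:R * L%:R ^+ 2 <=
    (N.-1)%:R * N%:R ^+ 2 * (f M%:R * M%:R) + 6 * (L%:R ^+ 3 * #|T|%:R * d2 * N%:R).
Proof.
move=> hf cXYZ cYXZ cZXY.
have split_box : (\sum_(p in frames) #|frame_box p| <= \sum_(p in frames)
    #|isolated (frame_box p)| + \sum_(p in frames) #|collinear_pairs (frame_box p)|)%N.
  by rewrite -big_split; apply: leq_sum => p _; exact: card_le_isolated.
have iso_le : ((\sum_(p in frames) #|isolated (frame_box p)|)%N%:R : R)
    <= (N.-1)%:R * N%:R ^+ 2 * (f M%:R * M%:R).
  rewrite natr_sum; apply: le_trans (ler_sum _ (fun p pF => card_isolated_frame_box hf pF)) _.
  by rewrite sumr_const card_frames mulnn -natrX -natrM mulr_natl.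
have col_le := sum_card_collinear_frame_box.
have tri_le := card_collinear_triangles cXYZ cYXZ cZXY.
move: split_box; rewrite sum_card_frame_box -(ler_nat R) natrD => main.
have {}col_le : ((\sum_(p in frames) #|collinear_pairs (frame_box p)|)%N%:R : R)
    <= 6 * (L%:R ^+ 3 * #|T|%:R * d2 * N%:R).
  move: col_le; rewrite -(ler_nat R) => /le_trans; apply.
  rewrite natrM; apply: le_trans (ler_wpM2r (ler0n _ _) tri_le) _.
  rewrite !natrM natrD; nra.
apply: le_trans (le_trans main (lerD iso_le col_le)).
by rewrite !natrM expr2 !mulrA.
Qed.

End FrameCounting.

Section StandingAssumptions.
Variables (R : realType) (f : R -> R).
Hypothesis hf : standing_assumptions f.

Lemma standing_mul_le (A B : R) : 0 < A -> A <= B -> A * f A <= B * f B.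
Proof.
case: hf => _ _ _ incr A_gt0; rewrite le_eqVlt => /predU1P[-> //|lt_AB].
exact/ltW/incr.
Qed.

Lemma standing_f1_ge1 : 1 <= f 1.
Proof.
case: hf => _ matching_le _ _.
have := @matching_le 0 1 (fun=> 0) (fun=> 0) (fun=> 0); rewrite mulr1; apply.
by move=> i j k; rewrite !ord1 !eqxx.
Qed.

Lemma standing_inv_ge (c d : R) : 0 < c -> c <= 1 -> c <= d -> c <= f d^-1.
Proof.
move=> c_gt0 le_c1 le_cd; have d_gt0 := lt_le_trans c_gt0 le_cd.
have f1 := standing_f1_ge1; case: hf => _ _ decr incr.
case: (lerP 1 d) => [le1d | ltd1].
  by apply: le_trans le_c1 (le_trans f1 (decr _ _ _ _)); rewrite ?invr_gt0 ?invf_le1.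
have := incr 1 d^-1 ltr01; rewrite invf_gt1 // mul1r => /(_ ltd1) lt_f.
have : d * f 1 < f d^-1.
  by move: lt_f; rewrite -(ltr_pM2l d_gt0) mulrA mulfV ?gt_eqF // mul1r.
nra.
Qed.

End StandingAssumptions.

Lemma frame_bound_algebra (R : realType) (t m l d2 F Phi : R) :
  2 <= m -> 0 <= t -> 0 < d2 -> 24 * d2 * l <= 1 -> 1 <= 48 * d2 * l ->
  d2 * F <= Phi ->
  t * (m - 1) * l ^+ 2 <= (m - 1) * m ^+ 2 * F + 6 * (l ^+ 3 * t * d2 * m) ->
  t <= 4608 * m ^+ 2 * d2 * Phi.
Proof.
move=> m_ge2 t_ge0 d2_gt0 l_le l_ge FPhi count.
have l_gt0 : 0 < l by nra.
have tl2_ge0 : 0 <= t * l ^+ 2 by rewrite mulr_ge0 // exprn_ge0 // ltW.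
have key : 0 <= t * l ^+ 2 * (m * (1 - 24 * d2 * l)) by rewrite !mulr_ge0 //; lra.
have half : 12 * (l ^+ 3 * t * d2 * m) <= t * l ^+ 2 * (m - 1) by nra.
have tl2 : t * l ^+ 2 <= 2 * m ^+ 2 * F by nra.
have tl2d2 : t * l ^+ 2 * d2 <= 2 * m ^+ 2 * Phi by nra.
have dl : 1 <= 2304 * (d2 * l) ^+ 2 by nra.
nra.
Qed.

Lemma card_triangles_le (R : realType) (f : R -> R) p' (X Y Z : {set 'Z_p'.+2}) (d1 d2 : R) :
  standing_assumptions f -> prime p'.+2 -> 0 < d2 -> d2 <= 24^-1 -> 1 <= d2 * p'.+2%:R ->
  count_bounds d1 d2 X Y Z -> count_bounds d1 d2 Y X Z -> count_bounds d1 d2 Z X Y ->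
  (#|triangles X Y Z|%:R : R) <= 4608 * p'.+2%:R ^+ 2 * d2 * f d2^-1.
Proof.
move=> hf pN d2_gt0 d2_small d2N cXYZ cYXZ cZXY.
(* The frame length L = n + 1 = trunc y satisfies 24 d2 L <= 1 <= 48 d2 L. *)
pose y := (24 * d2)^-1.
have d2y : 24 * d2 * y = 1 by rewrite mulfV // gt_eqF // mulr_gt0.
have y_ge1 : 1 <= y by rewrite invf_ge1 ?mulr_gt0 //; lra.
have yN : 24 * y <= p'.+2%:R by nra.
have [n Ln] : exists n, Num.truncn y = n.+1.
  by exists (Num.truncn y).-1; rewrite prednK // truncn_gt0.
have le_Ly : n.+1%:R <= y by rewrite -Ln truncn_le; lra.
have lt_yL : y < n.+2%:R by rewrite -Ln truncnS_gt.
rewrite -!natr1 in le_Ly lt_yL.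
have lt_2nN : (n.*2 < p'.+2)%N by rewrite -(ltr_nat R) -addnn natrD; lra.
have := frame_count_inequality pN lt_2nN hf cXYZ cYXZ cZXY.
have -> : (p'.+2.-1%:R : R) = p'.+2%:R - 1 by rewrite -natr1 addrK.
have n_ge0 : (0 : R) <= n%:R by rewrite ler0n.
apply: frame_bound_algebra; rewrite ?ler0n ?ler_nat //; try by rewrite -natr1; nra.
have le_Md2 : (n.*2.+1%:R : R) <= d2^-1.
  have -> : d2^-1 = 24 * y by rewrite /y invfM mulrA mulfV ?mul1r // pnatr_eq0.
  by rewrite -natr1 -addnn natrD; lra.
have := standing_mul_le hf (ltr0Sn _ _) le_Md2.
rewrite -(ler_pM2l d2_gt0) mulVKf ?gt_eqF // => /(le_trans _); apply.
by rewrite [f _ * _]mulrC.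
Qed.

Lemma card_le_of_count_bounds (R : realType) (f : R -> R) N (X Y Z : {set 'Z_N}) (d1 d2 : R) :
  standing_assumptions f -> prime N -> 0 < d1 -> d1 <= d2 ->
  count_bounds d1 d2 X Y Z -> count_bounds d1 d2 Y X Z -> count_bounds d1 d2 Z X Y ->
  (#|X|%:R : R) <= 4608 * (d2 / d1) * f d2^-1 * N%:R.
Proof.
case: N X Y Z => [|[|p']] // X Y Z hf pN d1_gt0 le_d12 cXYZ cYXZ cZXY.
have d2_gt0 := lt_le_trans d1_gt0 le_d12.
have ratio_ge1 : 1 <= d2 / d1 by rewrite ler_pdivlMr // mul1r.
have f_gt0 : 0 < f d2^-1 by case: hf => f_pos _ _ _; rewrite f_pos ?invr_gt0.
have N_ge2 : (2 : R) <= p'.+2%:R by rewrite ler_nat.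
have [-> | [x0 x0X]] := set_0Vmem X.
  by rewrite cards0; apply: mulr_ge0 (ler0n _ _); rewrite !mulr_ge0 ?invr_ge0 //; lra.
have d2N : 1 <= d2 * p'.+2%:R.
  have [lo hi] := cXYZ _ x0X; apply: le_trans hi; rewrite ler1n -(ltr_nat R).
  by apply: lt_le_trans lo; rewrite mulr_gt0 //; lra.
have le_XN : (#|X|%:R : R) <= p'.+2%:R.
  by rewrite ler_nat (leq_trans (max_card _)) ?card_ord.
have [d2_small | d2_big] := lerP d2 24^-1; last first.
  have f_ge : 24^-1 <= f d2^-1.
    by apply: (standing_inv_ge hf) (ltW d2_big); rewrite ?invr_gt0 ?invf_le1 ?ltr0n ?ler1n.
  apply: le_trans le_XN _; rewrite -{1}[p'.+2%:R]mul1r; apply: (ler_wpM2r (ler0n _ _)).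
  nra.
have T_le := card_triangles_le hf pN d2_gt0 d2_small d2N cXYZ cYXZ cZXY.
have T_ge : #|X|%:R * (d1 * p'.+2%:R) <= (#|triangles X Y Z|%:R : R).
  rewrite card_triangles natr_sum mulr_natl -sumr_const.
  by apply: ler_sum => x xX; case: (cXYZ _ xX).
have N_gt0 : (0 : R) < p'.+2%:R by lra.
rewrite -(ler_pM2r (mulr_gt0 d1_gt0 N_gt0)); apply: le_trans T_ge (le_trans T_le _).
have -> : 4608 * (d2 / d1) * f d2^-1 * p'.+2%:R * (d1 * p'.+2%:R) =
    4608 * p'.+2%:R ^+ 2 * d2 * f d2^-1 by field; lra.
by [].
Qed.

Theorem lemma2p1 (R : realType) :
  exists K : R, 0 < K /\
  forall (f : R -> R) (N : nat) (X Y Z : {set 'Z_N}) (d1 d2 : R),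
    standing_assumptions f ->
    prime N ->
    0 < d1 -> d1 <= d2 ->
    count_bounds d1 d2 X Y Z -> count_bounds d1 d2 X Z Y ->
    count_bounds d1 d2 Y Z X -> count_bounds d1 d2 Y X Z ->
    count_bounds d1 d2 Z X Y -> count_bounds d1 d2 Z Y X ->
    [/\ (#|X|%:R : R) <= K * (d2 / d1) * f (d2^-1) * N%:R,
        (#|Y|%:R : R) <= K * (d2 / d1) * f (d2^-1) * N%:R &
        (#|Z|%:R : R) <= K * (d2 / d1) * f (d2^-1) * N%:R].
Proof.
exists 4608; split; first by rewrite ltr0n.
move=> f N X Y Z d1 d2 hf pN d1_gt0 le_d12 cXYZ cXZY cYZX cYXZ cZXY cZYX.
split.
- exact: card_le_of_count_bounds hf pN d1_gt0 le_d12 cXYZ cYXZ cZXY.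
- exact: card_le_of_count_bounds hf pN d1_gt0 le_d12 cYXZ cXYZ cZYX.
- exact: card_le_of_count_bounds hf pN d1_gt0 le_d12 cZXY cXZY cYZX.
Qed.
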